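(* There is a constant $C>0$ depending only on $n,\alpha_1,\dots,\alpha_n$ such that for all $R\ge1$, all $f\in L^2(\mathbb{R}^n)$ with $\operatorname{supp}\widehat f\subset B^n_1(0)$ (with the associated sets $X_{\lambda,\eta}$ as in the context), all dyadic $1\le\lambda\le R$ and all dyadic $\eta\ge1$, $$\phi_{X_{\lambda,\eta},n,R}\le C\,\eta^{-1}\max\{1,R^{1-2\alpha}\lambda^{\alpha-1}\}.$$
   Context: Fix $n\ge1$, $\alpha_1,\dots,\alpha_n>0$, $\alpha=\min_j\alpha_j<\tfrac12$. $e^{it\Delta}f(x)=\int_{\mathbb{R}^n}e^{2\pi i x\cdot\xi}e^{4\pi^2 i t|\xi|^2}\widehat f(\xi)\,d\xi$. For $R\ge1$, $\theta(t)=\big(R^{1-2\alpha_1}t^{\alpha_1},\dots,R^{1-2\alpha_n}t^{\alpha_n}\big)$, $0\le t\le R$. A lattice cube is a set $\prod_{i=1}^{n+1}[m_i,m_i+1)\subset\mathbb{R}^{n+1}$ with $m\in\mathbb{Z}^{n+1}$. Given $f$, for each $j\in\mathbb{Z}^n$ with $|j|\le R$ choose $t_j\in[1,R]$ with $\sup_{1<t<R}|e^{it\Delta}f(j+\theta(t))|\le 2|e^{it_j\Delta}f(j+\theta(t_j))|$, and let $\widetilde Q_j$ be the lattice cube containing $(j+\theta(t_j),t_j)$. Set $X=(B^n_R(0)\times[1,R])\cap\bigcup_{|j|\le R}\widetilde Q_j$, and for dyadic $1\le\lambda\le R$, $X_\lambda=X\cap(\mathbb{R}^n\times[\lambda,2\lambda])$.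 For dyadic $\eta\ge1$, $\mathcal F_\eta$ is the collection of lattice cubes $\widetilde Q$ with $\eta\le\#\{y\in B^n_R(0)\cap\mathbb{Z}^n:\widetilde Q=\widetilde Q_y\}<2\eta$, and $X_{\lambda,\eta}=X_\lambda\cap\bigcup_{\widetilde Q\in\mathcal F_\eta}\widetilde Q$. For a union $Y$ of lattice cubes, $1\le\beta\le n+1$ and $R\ge1$, the density is $$\phi_{Y,\beta,R}=\sup\Big\{\frac{\#\{\widetilde Q\subset Y\text{ lattice cube}:\widetilde Q\subset B^{n+1}_r(x',t')\}}{r^\beta}:\ (x',t')\in\mathbb{R}^{n+1},\ r\ge1,\ B^{n+1}_r(x',t')\subset B^{n+1}_R(0)\Big\},$$ where $B^{n+1}_r(x',t')$ is the Euclidean ball in $\mathbb{R}^{n+1}$ of radius $r$ centered at $(x',t')$. *)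

From HB Require Import structures.
From mathcomp Require Import all_boot all_order all_algebra.
From mathcomp Require Import finmap.
From mathcomp Require Import all_classical all_reals all_analysis.
Set Implicit Arguments. Unset Strict Implicit. Unset Printing Implicit Defensive.
Import Order.TTheory GRing.Theory Num.Theory.
Local Open Scope classical_set_scope.
Local Open Scope ring_scope.

Section Defs.
Variable R : realType.

Definition enorm n (x : 'rV[R]_n) : R := Num.sqrt (\sum_i x ord0 i ^+ 2).
Definition dotv n (x y : 'rV[R]_n) : R := \sum_i x ord0 i * y ord0 i.
(* Euclidean norm on R^{n+1} = R^n x R (space-time points (x,t)) *)
Definition enorm1 n (p : 'rV[R]_n * R) : R :=
  Num.sqrt (\sum_i p.1 ord0 i ^+ 2 + p.2 ^+ 2).
Definition eball1 n (c : 'rV[R]_n * R) (r : R) : set ('rV[R]_n * R) :=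
  [set p | enorm1 (p.1 - c.1, p.2 - c.2) < r].

(* Lebesgue integral over R^n, computed as an iterated integral of the
   one-dimensional Lebesgue measure over the coordinates (by Fubini this is
   the n-dimensional Lebesgue integral for integrable functions).  Points are
   encoded by their coordinate sequence y : nat -> R. *)
Fixpoint iter_int (k : nat) (F : (nat -> R) -> R) (y : nat -> R) : R :=
  match k with
  | 0 => F y
  | k'.+1 => Rintegral (@lebesgue_measure R) setT
      (fun s : R => iter_int k' F (fun i => if i == k' then s else y i))
  end.

Fixpoint iter_inte (k : nat) (F : (nat -> R) -> \bar R) (y : nat -> R)
  : \bar R :=
  match k with
  | 0 => F y
  | k'.+1 => (\int[@lebesgue_measure R]_(s in setT)
      iter_inte k' F (fun i => if i == k' then s else y i))%E
  end.

Definition row_of n (y : nat -> R) : 'rV[R]_n := \row_(i < n) y (val i).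

Definition int_Rn n (g : 'rV[R]_n -> R) : R :=
  iter_int n (fun y => g (@row_of n y)) (fun _ => 0).
Definition inte_Rn n (g : 'rV[R]_n -> \bar R) : \bar R :=
  iter_inte n (fun y => g (@row_of n y)) (fun _ => 0).

Definition rV_boxes n : set (set 'rV[R]_n) :=
  [set B | exists A : 'I_n -> set R,
     (forall i, measurable (A i)) /\ B = [set x : 'rV[R]_n | forall i, A i (x ord0 i)]].
Definition borel_Rn n : set (set 'rV[R]_n) := smallest (sigma_algebra setT) (@rV_boxes n).
Definition borel_measurable_Rn n (g : 'rV[R]_n -> R) : Prop :=
  forall B : set R, measurable B -> @borel_Rn n (g @^-1` B).

(* fhat = g1 + i g2 is (a representative of) the Fourier transform of
   f in L^2(R^n) with supp fhat contained in the unit ball. *)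
Definition fourier_data n (g1 g2 : 'rV[R]_n -> R) : Prop :=
  [/\ borel_measurable_Rn g1, borel_measurable_Rn g2,
      (inte_Rn (fun xi => (g1 xi ^+ 2 + g2 xi ^+ 2)%:E) < +oo)%E &
      forall xi, 1 < enorm xi -> g1 xi = 0 /\ g2 xi = 0].

Definition phase n (x : 'rV[R]_n) (t : R) (xi : 'rV[R]_n) : R :=
  2 * pi * dotv x xi + 4 * pi ^+ 2 * t * enorm xi ^+ 2.
(* real and imaginary parts of e^{it Delta} f (x) *)
Definition schr_re n (g1 g2 : 'rV[R]_n -> R) (x : 'rV[R]_n) (t : R) : R :=
  int_Rn (fun xi => cos (phase x t xi) * g1 xi - sin (phase x t xi) * g2 xi).
Definition schr_im n (g1 g2 : 'rV[R]_n -> R) (x : 'rV[R]_n) (t : R) : R :=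
  int_Rn (fun xi => sin (phase x t xi) * g1 xi + cos (phase x t xi) * g2 xi).
Definition schr_abs n (g1 g2 : 'rV[R]_n -> R) (x : 'rV[R]_n) (t : R) : R :=
  Num.sqrt (schr_re g1 g2 x t ^+ 2 + schr_im g1 g2 x t ^+ 2).

Definition theta n (alpha : 'I_n -> R) (Rr t : R) : 'rV[R]_n :=
  \row_i (Rr `^ (1 - 2 * alpha i) * t `^ alpha i).

(* alpha = min_j alpha_j (the default 1 is irrelevant once min < 1/2) *)
Definition amin n (alpha : 'I_n -> R) : R := \big[Num.min/1]_i alpha i.

Definition intv n (j : 'rV[int]_n) : 'rV[R]_n := map_mx (fun z : int => z%:~R) j.

Definition cube n (m : 'rV[int]_n * int) : set ('rV[R]_n * R) :=
  [set p : 'rV[R]_n * R | (forall i, (m.1 ord0 i)%:~R <= p.1 ord0 i < (m.1 ord0 i)%:~R + 1)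
           /\ (m.2%:~R <= p.2 < m.2%:~R + 1)].
Definition cube_of n (p : 'rV[R]_n * R) : 'rV[int]_n * int :=
  (map_mx (fun x : R => Num.floor x) p.1, Num.floor p.2).

Definition valid_choice n (alpha : 'I_n -> R) (Rr : R)
    (g1 g2 : 'rV[R]_n -> R) (tsel : 'rV[int]_n -> R) : Prop :=
  forall j : 'rV[int]_n, enorm (intv j) <= Rr ->
    (1 <= tsel j <= Rr) /\
    forall t, 1 < t < Rr ->
      schr_abs g1 g2 (intv j + theta alpha Rr t) t
        <= 2 * schr_abs g1 g2 (intv j + theta alpha Rr (tsel j)) (tsel j).

Definition Qt n (alpha : 'I_n -> R) (Rr : R) (tsel : 'rV[int]_n -> R)
    (j : 'rV[int]_n) : 'rV[int]_n * int :=
  cube_of (intv j + theta alpha Rr (tsel j), tsel j).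

Definition Xset n alpha Rr tsel : set ('rV[R]_n * R) :=
  [set p | enorm p.1 < Rr /\ 1 <= p.2 <= Rr /\
           exists j, enorm (intv j) <= Rr /\ cube (@Qt n alpha Rr tsel j) p].
Definition Xl n alpha Rr tsel (lam : R) : set ('rV[R]_n * R) :=
  @Xset n alpha Rr tsel `&` [set p | lam <= p.2 <= 2 * lam].

Definition mult n alpha Rr tsel (m : 'rV[int]_n * int) : nat :=
  #|` fset_set [set y : 'rV[int]_n | enorm (intv y) < Rr /\
                                      @Qt n alpha Rr tsel y = m] |.
Definition in_F n alpha Rr tsel (eta : nat) (m : 'rV[int]_n * int) : Prop :=
  (eta <= @mult n alpha Rr tsel m < 2 * eta)%N.
Definition Xle n alpha Rr tsel (lam : R) (eta : nat) : set ('rV[R]_n * R) :=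
  @Xl n alpha Rr tsel lam `&`
  [set p | exists m, @in_F n alpha Rr tsel eta m /\ cube m p].

Definition ncubes n (Y : set ('rV[R]_n * R)) (c : 'rV[R]_n * R) (r : R) : nat :=
  #|` fset_set [set m : 'rV[int]_n * int | cube m `<=` Y /\ cube m `<=` eball1 c r] |.

Definition density n (Y : set ('rV[R]_n * R)) (beta Rr : R) : \bar R :=
  ereal_sup [set e : \bar R | exists (c : 'rV[R]_n * R) (r : R),
     [/\ 1 <= r, eball1 c r `<=` eball1 (0, 0) Rr &
         e = ((ncubes Y c r)%:R / r `^ beta)%:E]].

End Defs.

From HB Require Import structures.
From mathcomp Require Import all_boot all_order all_algebra.
From mathcomp Require Import finmap.
From mathcomp Require Import all_classical all_reals all_analysis.
From mathcomp Require Import ring lra zify.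
Import Order.TTheory GRing.Theory Num.Theory.
Import numFieldNormedType.Exports.
Set Implicit Arguments. Unset Strict Implicit.
Local Open Scope classical_set_scope.
Local Open Scope ring_scope.

(* Every lattice cube of X_{lambda,eta} is the cube ~Q_y of at least eta points
   y of Z^n, so eta times the number of such cubes inside a ball B_r(c) is at
   most the number of y whose point (y + theta(t_y), t_y) lies in B_r(c) with
   t_y in [lambda, 2 lambda].  On [lambda, 2 lambda] every theta_i is
   Lipschitz with constant K ~ max(1, R^(1-2 alpha) lambda^(alpha-1)).
   Cutting the time window of the ball into about 2K steps of length r/K, on
   each step y_i is confined to an interval of length about 4r around
   c_i - theta_i(s).  Hence eta * #cubes <~ K r^n, the density bound for
   beta = n. *)

Section PowerBounds.
Variable R : realType.

Lemma powR_pred_dyadic_le (p lam c : R) : 0 < p -> 0 < lam -> lam <= c <= 2 * lam ->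
  c `^ (p - 1) <= 2 `^ p * lam `^ (p - 1).
Proof.
move=> p0 lam0 /andP[lam_c c_2lam].
have two_p : 1 <= 2 `^ p :> R.
  by rewrite -[X in X <= _](powRr0 2); apply: ler_powR; [lra | exact: ltW].
have [p1 | p1] := lerP p 1; last first.
  apply: (@le_trans _ _ ((2 * lam) `^ (p - 1))).
    by apply: ge0_ler_powR; rewrite ?nnegrE; lra.
  rewrite powRM; [| lra | lra].
  by apply: ler_wpM2r; [exact: powR_ge0 | apply: ler_powR; lra].
have -> : p - 1 = - (1 - p) by rewrite opprB.
rewrite !powRN; apply: (@le_trans _ _ ((lam `^ (1 - p))^-1)).
  rewrite lef_pV2 ?posrE ?powR_gt0 //; last lra.
  by apply: ge0_ler_powR; rewrite ?nnegrE; lra.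
by rewrite ler_peMl // invr_ge0 powR_ge0.
Qed.

Lemma powR_lipschitz_dyadic (p lam a b : R) : 0 < p -> 0 < lam ->
  lam <= a <= 2 * lam -> lam <= b <= 2 * lam ->
  `|b `^ p - a `^ p| <= p * 2 `^ p * lam `^ (p - 1) * `|b - a|.
Proof.
move=> p0 lam0.
wlog ab : a b / a <= b.
  move=> W ha hb; have [ab | ba] := leP a b; first exact: W.
  by rewrite distrC (distrC b); apply: W => //; exact: ltW.
move=> /andP[lam_a a_2lam] /andP[lam_b b_2lam].
have a0 : 0 < a by lra.
have deriv x : x \in `]a, b[ -> is_derive x 1 (fun x : R => x `^ p) (p * x `^ (p - 1)).
  by rewrite in_itv /= => /andP[ax _]; apply: is_derive1_powR; lra.
have cont : {within [set` `[a, b]], continuous (fun x : R => x `^ p)}.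
  apply: derivable_within_continuous => x; rewrite in_itv /= => /andP[ax _].
  by apply: derivable_powR; rewrite in_itv /= andbT; lra.
have [c /[!in_itv] /= /andP[ac cb] ->] := MVT_segment ab deriv cont.
rewrite normrM ger0_norm; last by apply: mulr_ge0; [lra | exact: powR_ge0].
rewrite (@ger0_norm _ (b - a)); last lra.
rewrite -!mulrA ler_wpM2l //; first lra.
rewrite mulrA ler_wpM2r //; first lra.
by apply: powR_pred_dyadic_le => //; lra.
Qed.

Definition theta_speed (Rr lam p : R) : R := Rr `^ (1 - 2 * p) * lam `^ (p - 1).

Lemma theta_speed_le (Rr lam p q : R) : 1 <= lam <= Rr -> p <= q ->
  theta_speed Rr lam q <= theta_speed Rr lam p.
Proof.
move=> /andP[lam1 lamR] pq; rewrite /theta_speed; set d := q - p.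
have -> : Rr `^ (1 - 2 * q) = Rr `^ (1 - 2 * p) * Rr `^ (- (2 * d)).
  by rewrite -powRD; [congr (_ `^ _); rewrite /d; ring | apply/implyP; lra].
have -> : lam `^ (q - 1) = lam `^ (p - 1) * lam `^ d.
  by rewrite -powRD; [congr (_ `^ _); rewrite /d; ring | apply/implyP; lra].
rewrite mulrACA ler_piMr ?mulr_ge0 ?powR_ge0 // powRN.
rewrite mulrC ler_pdivrMr ?mul1r; last by apply: powR_gt0; lra.
apply: (@le_trans _ _ (Rr `^ d)).
  by apply: ge0_ler_powR; rewrite ?nnegrE /d; lra.
by apply: ler_powR; rewrite /d; lra.
Qed.

Lemma amin_le n (alpha : 'I_n -> R) i : amin alpha <= alpha i.
Proof. by rewrite /amin (bigD1 i) //= ge_min lexx. Qed.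

End PowerBounds.

Section Discretization.
Variable R : realType.

Lemma grid_cover (t0 h N t : R) : 0 < h -> t0 <= t < t0 + N * h ->
  exists q : 'I_(`|Num.floor N|.+1), t0 + q%:R * h <= t < t0 + q%:R * h + h.
Proof.
move=> h0 /andP[t0t tN]; set u := (t - t0) / h.
have u0 : 0 <= u by apply: divr_ge0; lra.
have uN : u < N by rewrite ltr_pdivrMr //; lra.
have fu0 : 0 <= Num.floor u by rewrite floor_ge0.
have qN : (`|Num.floor u| < `|Num.floor N|.+1)%N.
  rewrite ltnS -(ler_nat R) !natr_absz !ger0_norm ?floor_ge0 ?ler_int //; try lra.
  by apply: le_floor; lra.
exists (Ordinal qN); rewrite /= natr_absz ger0_norm //.
have := floor_le u; have := floorD1_gt u; rewrite intrD1.
by rewrite /u ler_pdivlMr // ltr_pdivrMr //; lra.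
Qed.

Lemma int_window (z : int) (x w : R) : `|z%:~R - x| < w ->
  exists d : 'I_(`|Num.floor (2 * w)|.+2), z = Num.floor (x - w) + (d : nat)%:Z.
Proof.
rewrite ltr_norml => /andP[zl zu]; set b := Num.floor (x - w).
have := floor_le (x - w); have := floorD1_gt (x - w); rewrite intrD1 -/b => b1 b2.
have d0 : 0 < z - b by rewrite -(ltr_int R) intrB; lra.
have d2 : z - b - 1 <= Num.floor (2 * w) by rewrite floor_ge_int !intrB; lra.
have dlt : (`|z - b| < `|Num.floor (2 * w)|.+2)%N.
  have : 0 <= Num.floor (2 * w) by rewrite floor_ge0; lra.
  lia.
by exists (Ordinal dlt); rewrite /= gez0_abs ?subrKC // ltW.
Qed.

Lemma clamp_dyadic (lam t s h : R) : 0 < lam -> lam <= t <= 2 * lam -> s <= t < s + h ->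
  lam <= Num.min (Num.max s lam) (2 * lam) <= 2 * lam /\
  `|t - Num.min (Num.max s lam) (2 * lam)| <= h.
Proof.
move=> lam0 /andP[? ?] /andP[? ?]; rewrite maxEle minEle.
case: (leP s lam) => ?; [case: (leP lam (2 * lam)) | case: (leP s (2 * lam))] => ?;
  by split; [apply/andP; split | rewrite ler_norml; apply/andP; split]; lra.
Qed.

End Discretization.

(* [fset_set A] is empty when [A] is infinite. *)
Lemma mem_fset_set (T : choiceType) (A : set T) x : x \in fset_set A -> A x.
Proof.
have [fA | nfA] := pselect (finite_set A); first by rewrite in_fset_set // inE.
by rewrite /fset_set; case: pselect.
Qed.

Lemma leq_mul_card_fibres (T : finType) (Y M : choiceType) (f : T -> Y)
    (P : set Y) (key : Y -> M) (S : {fset M}) (eta : nat) :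
  (forall m, m \in S -> eta <= #|` fset_set [set y | P y /\ key y = m]|)%N ->
  (forall y, P y -> key y \in S -> exists x, f x = y) ->
  (eta * #|` S| <= #|T|)%N.
Proof.
move=> fibre_big f_onto.
have fibre_count m : m \in S -> (eta <= count (fun x => key (f x) == m) (enum T))%N.
  move=> mS; apply: leq_trans (fibre_big m mS) _; rewrite -size_filter.
  have sub : (fset_set [set y | P y /\ key y = m]
      `<=` seq_fset tt (map f [seq x <- enum T | key (f x) == m]))%fset.
    apply/fsubsetP => y /mem_fset_set [Py ky].
    have [x fx] : exists x, f x = y by apply: f_onto; rewrite ?ky.
    by rewrite seq_fsetE; apply/mapP; exists x; rewrite // mem_filter fx ky eqxx mem_enum.
  apply: leq_trans (fsubset_leq_card sub) _.
  by rewrite size_seq_fset (leq_trans (size_undup _)) // size_map.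
apply: (@leq_trans (\sum_(m <- S) count (fun x => key (f x) == m) (enum T))).
  rewrite mulnC -sum1_size big_distrl /= mul1n big_seq [leqRHS]big_seq.
  exact: leq_sum.
rewrite [leqRHS]cardE -sum1_size.
under eq_bigr do rewrite -sum1_count.
rewrite (exchange_big_dep xpredT) //=; apply: leq_sum => x _.
rewrite sum1_count (@eq_count _ _ (pred1 (key (f x)))); last by move=> m; rewrite /= eq_sym.
by rewrite count_uniq_mem ?fset_uniq // leq_b1.
Qed.

Section LatticeCubes.
Variables (R : realType) (n : nat).
Implicit Types (p : 'rV[R]_n * R) (m : 'rV[int]_n * int).

Lemma enorm1_coord_lt p r : enorm1 p < r ->
  (forall i, `|p.1 ord0 i| < r) /\ `|p.2| < r.
Proof.
have sum_ge0 : 0 <= \sum_i p.1 ord0 i ^+ 2 by apply: sumr_ge0 => i _; exact: sqr_ge0.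
rewrite /enorm1 => lt_r; split => [i|]; apply: le_lt_trans lt_r;
  rewrite -sqrtr_sqr ler_sqrt ?addr_ge0 ?sqr_ge0 //.
  by rewrite (bigD1 i) //= -addrA lerDl addr_ge0 ?sqr_ge0 // sumr_ge0 // => j _; exact: sqr_ge0.
by rewrite lerDr.
Qed.

Lemma cube_cube_of p : cube (cube_of p) p.
Proof.
split => [i|] /=; last by rewrite floor_le /= -intrD1 floorD1_gt.
by rewrite mxE floor_le /= -intrD1 floorD1_gt.
Qed.

Lemma cube_ofP m p : cube m p -> cube_of p = m.
Proof.
case: m => m1 m2 [in1 in2]; congr pair; last by apply/floor_def; rewrite intrD1.
by apply/rowP => i; rewrite mxE; apply/floor_def; rewrite intrD1; exact: in1.
Qed.

Lemma cube_corner m : cube m (@intv R n m.1, m.2%:~R).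
Proof. by split => [i|] /=; rewrite ?mxE lexx ltrDl ltr01. Qed.

End LatticeCubes.

Arguments cube_corner {R n} m.

Section DyadicSlab.
Variables (R : realType) (n : nat) (alpha : 'I_n -> R) (Rr lam : R).
Hypotheses (alpha_gt0 : forall i, 0 < alpha i) (lam_ge1 : 1 <= lam) (lam_le : lam <= Rr).
Variable tsel : 'rV[int]_n -> R.

(* A Lipschitz constant of theta on [lam, 2 lam]; the [max 1] keeps it >= 1,
   so that the number of time steps below is at most 3 * theta_lip. *)
Definition theta_lip : R :=
  (\sum_i alpha i * 2 `^ alpha i + 1) * Num.max 1 (theta_speed Rr lam (amin alpha)).

Lemma theta_lip_ge1 : 1 <= theta_lip.
Proof.
have coef_ge0 i : 0 <= alpha i * 2 `^ alpha i by rewrite mulr_ge0 ?powR_ge0 // ltW.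
rewrite -[1]mulr1 ler_pM ?le_max ?lexx //.
by rewrite lerDr sumr_ge0.
Qed.

Lemma theta_lipschitz i s t : lam <= s <= 2 * lam -> lam <= t <= 2 * lam ->
  `|theta alpha Rr t ord0 i - theta alpha Rr s ord0 i| <= theta_lip * `|t - s|.
Proof.
move=> s_in t_in; rewrite !mxE -mulrBr normrM ger0_norm ?powR_ge0 //.
have lam0 : 0 < lam by apply: lt_le_trans lam_ge1.
have coef_ge0 j : 0 <= alpha j * 2 `^ alpha j by rewrite mulr_ge0 ?powR_ge0 // ltW.
apply: le_trans (ler_wpM2l (powR_ge0 _ _) (powR_lipschitz_dyadic (alpha_gt0 i) lam0 s_in t_in)) _.
have -> : Rr `^ (1 - 2 * alpha i) * (alpha i * 2 `^ alpha i * lam `^ (alpha i - 1) * `|t - s|)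
    = alpha i * 2 `^ alpha i * theta_speed Rr lam (alpha i) * `|t - s|.
  by rewrite /theta_speed; ring.
rewrite ler_wpM2r // ler_pM ?mulr_ge0 ?powR_ge0 //; first exact: ltW.
  by rewrite (bigD1 i) //= -addrA lerDl addr_ge0 // sumr_ge0.
by rewrite le_max (theta_speed_le _ (amin_le alpha i)) ?orbT ?lam_ge1.
Qed.

Lemma Xle_cube_mult eta m :
  cube m `<=` Xle alpha Rr tsel lam eta -> (eta <= mult alpha Rr tsel m)%N.
Proof.
move=> sub; have [_ [m' [m'F m'p]]] := sub _ (cube_corner m).
by move: m'F; rewrite -(cube_ofP m'p) (cube_ofP (cube_corner m)) => /andP[].
Qed.

Lemma Xle_ball_Qt eta c r y : let t := tsel y in
  cube (Qt alpha Rr tsel y) `<=` Xle alpha Rr tsel lam eta ->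
  cube (Qt alpha Rr tsel y) `<=` eball1 c r ->
  [/\ lam <= t <= 2 * lam, `|t - c.2| < r &
      forall i, `|(y ord0 i)%:~R + theta alpha Rr t ord0 i - c.1 ord0 i| < r].
Proof.
move=> t sX sB; pose p := (@intv R n y + theta alpha Rr t, t).
have [[_ lam_t] _] := sX p (cube_cube_of p).
have [near_x near_t] := enorm1_coord_lt (sB p (cube_cube_of p)).
by split => // i; have := near_x i; rewrite /= !mxE.
Qed.

Definition grid_time (c2 r : R) (q : nat) : R :=
  Num.min (Num.max (c2 - r + q%:R * (r / theta_lip)) lam) (2 * lam).

Lemma grid_time_near c2 r t : 0 < r -> lam <= t <= 2 * lam -> `|t - c2| < r ->
  exists q : 'I_(`|Num.floor (2 * theta_lip)|.+1),
    lam <= grid_time c2 r q <= 2 * lam /\ `|t - grid_time c2 r q| <= r / theta_lip.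
Proof.
move=> r0 t_in; rewrite ltr_norml => /andP[t_lo t_hi].
have K1 := theta_lip_ge1.
have h0 : 0 < r / theta_lip by rewrite divr_gt0 //; lra.
have [|q q_t] := @grid_cover _ (c2 - r) _ (2 * theta_lip) t h0.
  have -> : 2 * theta_lip * (r / theta_lip) = 2 * r by field; rewrite gt_eqF //; lra.
  by apply/andP; split; lra.
by exists q; apply: clamp_dyadic q_t; [apply: lt_le_trans lam_ge1 | ].
Qed.

Lemma Qt_row_window (c : 'rV[R]_n * R) r y s : let t := tsel y in
  (forall i, `|(y ord0 i)%:~R + theta alpha Rr t ord0 i - c.1 ord0 i| < r) ->
  lam <= t <= 2 * lam -> lam <= s <= 2 * lam -> `|t - s| <= r / theta_lip ->
  exists d : {ffun 'I_n -> 'I_(`|Num.floor (2 * (2 * r))|.+2)},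
    y = \row_i (Num.floor (c.1 ord0 i - theta alpha Rr s ord0 i - 2 * r) + (d i : nat)%:Z).
Proof.
move=> t near_x t_in s_in; rewrite ler_pdivlMr; last by have := theta_lip_ge1; lra.
move=> near_t.
have near i : `|(y ord0 i)%:~R - (c.1 ord0 i - theta alpha Rr s ord0 i)| < 2 * r.
  have lip := theta_lipschitz i s_in t_in.
  rewrite (_ : _ - _ = ((y ord0 i)%:~R + theta alpha Rr t ord0 i - c.1 ord0 i)
    - (theta alpha Rr t ord0 i - theta alpha Rr s ord0 i)); last by ring.
  by apply: le_lt_trans (ler_normB _ _) _; have := near_x i; nra.
have /fin_all_exists [d dP] := fun i => int_window (near i).
by exists (finfun d); apply/rowP => i; rewrite [LHS]dP !mxE ffunE.
Qed.

Lemma Xle_ncubes_le eta (c : 'rV[R]_n * R) r : 0 < r ->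
  (eta * ncubes (Xle alpha Rr tsel lam eta) c r
     <= `|Num.floor (2 * theta_lip)|.+1 * `|Num.floor (2 * (2 * r))|.+2 ^ n)%N.
Proof.
move=> r0.
pose f (x : 'I_(`|Num.floor (2 * theta_lip)|.+1)
            * {ffun 'I_n -> 'I_(`|Num.floor (2 * (2 * r))|.+2)}) : 'rV[int]_n :=
  \row_i (Num.floor (c.1 ord0 i - theta alpha Rr (grid_time c.2 r x.1) ord0 i - 2 * r)
          + (x.2 i : nat)%:Z).
have := @leq_mul_card_fibres _ _ _ f (fun y => enorm (@intv R n y) < Rr) (Qt alpha Rr tsel).
rewrite card_prod card_ffun !card_ord; apply.
  by move=> m /mem_fset_set [sX _]; exact: Xle_cube_mult.
move=> y _ /mem_fset_set [sX sB].
have [t_in near_t near_x] := Xle_ball_Qt sX sB.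
have [q [s_in near_s]] := grid_time_near r0 t_in near_t.
by have [d ->] := Qt_row_window near_x t_in s_in near_s; exists (q, d).
Qed.

Lemma Xle_ncubes_bound eta (c : 'rV[R]_n * R) r : 1 <= r ->
  eta%:R * (ncubes (Xle alpha Rr tsel lam eta) c r)%:R <= 3 * theta_lip * (6 * r) ^+ n.
Proof.
move=> r1; have K1 := theta_lip_ge1.
have grid_le : (`|Num.floor (2 * theta_lip)|.+1)%:R <= 3 * theta_lip.
  rewrite -addn1 natrD natr_absz ger0_norm ?floor_ge0; last lra.
  by have := floor_le (2 * theta_lip); lra.
have window_le : (`|Num.floor (2 * (2 * r))|.+2)%:R <= 6 * r.
  rewrite -addn2 natrD natr_absz ger0_norm ?floor_ge0; last lra.
  by have := floor_le (2 * (2 * r)); lra.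
rewrite -natrM; apply: (le_trans (y := (_ * _ ^ n)%N%:R)).
  by rewrite ler_nat; apply: Xle_ncubes_le; lra.
rewrite natrM natrX ler_pM ?exprn_ge0 ?lerXn2r ?nnegrE //; lra.
Qed.

End DyadicSlab.

Unset Implicit Arguments.
Set Strict Implicit.

Theorem lemma3p7 (R : realType) (n : nat) (alpha : 'I_n -> R) :
  (1 <= n)%N -> (forall i, 0 < alpha i) -> amin alpha < 1 / 2 ->
  exists C : R, 0 < C /\
  forall (Rr : R) (g1 g2 : 'rV[R]_n -> R) (tsel : 'rV[int]_n -> R),
    1 <= Rr -> fourier_data g1 g2 -> valid_choice alpha Rr g1 g2 tsel ->
    forall k l : nat, (2 ^ k)%:R <= Rr ->
      (density (Xle alpha Rr tsel (2 ^ k)%:R (2 ^ l)) n%:R Rr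
        <= (C * ((2 ^ l)%:R)^-1 *
            Num.max 1 (Rr `^ (1 - 2 * amin alpha) *
                       (2 ^ k)%:R `^ (amin alpha - 1)))%:E)%E.
Proof.
move=> _ alpha_gt0 _.
set M := \sum_i alpha i * 2 `^ alpha i + 1.
have M_gt0 : 0 < M.
  by rewrite ltr_wpDl ?ltr01 // sumr_ge0 // => i _; rewrite mulr_ge0 ?powR_ge0 // ltW.
exists (3 * 6 ^+ n * M); split; first by rewrite !mulr_gt0 ?exprn_gt0.
move=> Rr g1 g2 tsel _ _ _ k l lam_le.
have lam_ge1 : 1 <= (2 ^ k)%:R :> R by rewrite ler1n expn_gt0.
have eta_gt0 : 0 < (2 ^ l)%:R :> R by rewrite ltr0n expn_gt0.
apply: ge_ereal_sup => _ [c [r [r_ge1 _ ->]]].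
have rn_gt0 : 0 < r ^+ n by rewrite exprn_gt0 //; lra.
rewrite lee_fin powR_mulrn ?ler_pdivrMr //; last lra.
rewrite -(ler_pM2l eta_gt0).
apply: le_trans (Xle_ncubes_bound alpha_gt0 lam_ge1 lam_le tsel (2 ^ l) c r_ge1) _.
rewrite /theta_lip /theta_speed exprMn -/M le_eqVlt; apply/orP; left; apply/eqP.
by field; lra.
Qed.
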